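(* Let $n\geq 2$. The composite \[ \mathcal{M}_{0,n+1}/\Sigma_n\xrightarrow{\ \phi\ } C_n(\mathbb{C})/(\mathbb{C}\rtimes\mathbb{C}^* )\subseteq \frac{SP^n(\mathbb{C})-\Delta}{\mathbb{C}\rtimes\mathbb{C}^*}\xrightarrow{\ \psi\ }\mathbb{P}(n,n-1,\dots,2) \] is a topological embedding.
   Context: $\mathcal{M}_{0,n+1}$ is the moduli space of $n+1$ distinct labelled points on the Riemann sphere modulo biholomorphisms, identified (by sending the $0$-th point to $\infty$) with $F_n(\mathbb{C})/(\mathbb{C}\rtimes\mathbb{C}^* )$, where $F_n(\mathbb{C})$ is the ordered configuration space of $n$ points in $\mathbb{C}$ and $\mathbb{C}\rtimes\mathbb{C}^*$ acts by $z\mapsto\lambda z+\mu$; $\Sigma_n$ permutes the $n$ points. $C_n(\mathbb{C})$ is the unordered configuration space, $SP^n(\mathbb{C})$ the symmetric power, $\Delta$ its diagonal $\{\{z,\dots,z\}\}$. The map $\phi$ sends the class of $(z_1,\dots,z_n)$ to the class of $\{z_1,\dots,z_n\}$. The map $\psi$ sends the class of $\{z_1,\dots,z_n\}$ to $[a_0:\dots:a_{n-2}]$, where $a_k$ is the coefficient of $z^k$ in $\prod_i(z-z_i+B)$ with $B=(z_1+\dots+z_n)/n$. $\mathbb{P}(n,n-1,\dots,2)=(\mathbb{C}^{n-1}-\{0\})/\sim$ with $(a_0,\dots,a_{n-2})\sim(t^{n}a_0,t^{n-1}a_1,\dots,t^{2}a_{n-2})$, $t\in\mathbb{C}^*$.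 *)

From HB Require Import structures.
From mathcomp Require Import all_boot all_order all_algebra all_fingroup.
From mathcomp Require Import generic_quotient.
From mathcomp Require Import all_classical all_reals all_analysis.
From mathcomp Require Import complex.

Set Implicit Arguments.
Unset Strict Implicit.
Unset Printing Implicit Defensive.

Import Order.TTheory GRing.Theory Num.Theory.
Import numFieldTopology.Exports.

(* The topology of the complex numbers R[i]: the metric topology of |z|. *)
HB.instance Definition _ (R : realType) :=
  PseudoPointedMetric.copy R[i] (R[i])^o.
Local Open Scope classical_set_scope.
Local Open Scope ring_scope.
Local Open Scope complex_scope.
Local Open Scope quotient_scope.

Section Moduli.
Variables (R : realType) (n : nat).

Local Notation CC := (R[i]).

(* F_n(C): ordered configurations of n distinct points, with the subset
   topology inherited from the product topology on C^n = ('I_n -> C). *)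
Definition confset : set {ptws 'I_n -> CC} := [set x : {ptws 'I_n -> CC} | injective x].
Local Notation Fconf := (set_type confset).

(* The relation whose classes are the orbits of Sigma_n x (C semidirect C^* )
   acting on F_n(C): permutation of the points and z |-> l z + m. *)
Definition conf_rel (x y : 'I_n -> CC) : Prop :=
  exists (s : 'S_n) (l m : CC), l != 0 /\ forall i, y i = l * x (s i) + m.

Lemma conf_rel_refl x : conf_rel x x.
Proof. by exists 1%g, 1, 0; split => // i; rewrite perm1 mul1r addr0. Qed.

Lemma conf_rel_sym x y : conf_rel x y -> conf_rel y x.
Proof.
move=> [s [l [m [l0 e]]]]; exists s^-1%g, l^-1, (- (m / l)); split.
  by rewrite invr_eq0.
move=> i; rewrite e permKV mulrDr mulrA mulVf // mul1r.
by rewrite -addrA mulrC subrr addr0.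
Qed.

Lemma conf_rel_trans x y z : conf_rel x y -> conf_rel y z -> conf_rel x z.
Proof.
move=> [s [l [m [l0 e]]]] [s' [l' [m' [l0' e']]]].
exists (s' * s)%g, (l' * l), (l' * m + m'); split; first by rewrite mulf_neq0.
by move=> i; rewrite e' e permM mulrDr mulrA addrA.
Qed.

Definition conf_eqb (x y : Fconf) : bool := `[< conf_rel (val x) (val y) >].

Lemma conf_eqb_refl : reflexive conf_eqb.
Proof. by move=> x; apply/asboolP; exact: conf_rel_refl. Qed.
Lemma conf_eqb_sym : symmetric conf_eqb.
Proof.
by move=> x y; apply/idP/idP => /asboolP h; apply/asboolP; exact: conf_rel_sym.
Qed.
Lemma conf_eqb_trans : transitive conf_eqb.
Proof.
move=> y x z /asboolP h1 /asboolP h2; apply/asboolP; exact: conf_rel_trans h1 h2.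
Qed.

Definition conf_equiv : equiv_rel Fconf := EquivRel conf_eqb conf_eqb_refl conf_eqb_sym conf_eqb_trans.

(* M_{0,n+1}/Sigma_n = F_n(C)/(Sigma_n x (C semidirect C^* )), with the
   quotient topology. *)
Definition M0quot : topologicalType := @quotient_topology Fconf {eq_quot conf_equiv}.

(* C^{n-1} - {0}, indexed by the coefficients a_0, ..., a_{n-2}. *)
Definition nzset : set {ptws 'I_n.-1 -> CC} := [set a : {ptws 'I_n.-1 -> CC} | a <> (fun=> 0)].
Local Notation NZ := (set_type nzset).

Definition wrel (a b : 'I_n.-1 -> CC) : Prop :=
  exists t : CC, t != 0 /\ forall k : 'I_n.-1, b k = t ^+ (n - k) * a k.

Lemma wrel_refl a : wrel a a.
Proof. by exists 1; split => // k; rewrite expr1n mul1r. Qed.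

Lemma wrel_sym a b : wrel a b -> wrel b a.
Proof.
move=> [t [t0 e]]; exists t^-1; split; first by rewrite invr_eq0.
by move=> k; rewrite e mulrA exprVn mulVf ?mul1r // expf_neq0.
Qed.

Lemma wrel_trans a b c : wrel a b -> wrel b c -> wrel a c.
Proof.
move=> [t [t0 e]] [t' [t0' e']]; exists (t' * t); split.
  by rewrite mulf_neq0.
by move=> k; rewrite e' e mulrA exprMn.
Qed.

Definition weqb (a b : NZ) : bool := `[< wrel (val a) (val b) >].

Lemma weqb_refl : reflexive weqb.
Proof. by move=> x; apply/asboolP; exact: wrel_refl. Qed.
Lemma weqb_sym : symmetric weqb.
Proof.
by move=> x y; apply/idP/idP => /asboolP h; apply/asboolP; exact: wrel_sym.
Qed.
Lemma weqb_trans : transitive weqb.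
Proof.
move=> y x z /asboolP h1 /asboolP h2; apply/asboolP; exact: wrel_trans h1 h2.
Qed.

Definition wequiv : equiv_rel NZ := EquivRel weqb weqb_refl weqb_sym weqb_trans.

Definition Pw : topologicalType := @quotient_topology NZ {eq_quot wequiv}.

Definition barycenter (x : 'I_n -> CC) : CC := (\sum_i x i) / n%:R.
Definition coefvec (x : 'I_n -> CC) : 'I_n.-1 -> CC :=
  fun k => (\prod_(i < n) ('X - (x i)%:P + (barycenter x)%:P))`_k.

End Moduli.

(* Default point of C^{n-1} - {0} (needs n >= 2); only used to make the map
   total at the level of types, it is never reached on F_n(C). *)
Lemma ones_nz (R : realType) (n : nat) (hn : (2 <= n)%N) :
  @nzset R n (fun _ => 1).
Proof.
rewrite /nzset /= => /(congr1 (fun f => f (@Ordinal n.-1 0 _))).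
have h : (0 < n.-1)%N by case: n hn => [|[]].
by move/(_ h)/eqP; rewrite oner_eq0.
Qed.

Definition NZ_default (R : realType) (n : nat) (hn : (2 <= n)%N) : set_type (@nzset R n) :=
  SigSub (mem_set (@ones_nz R n hn)).

Definition psiphi (R : realType) (n : nat) (hn : (2 <= n)%N) :
    M0quot R n -> Pw R n :=
  fun q => \pi_(Pw R n) (insubd (@NZ_default R n hn) (coefvec (val (repr q)))).

Definition top_embedding {X Y : topologicalType} (f : X -> Y) : Prop :=
  [/\ continuous f, injective f &
      forall U : set X, open U ->
        exists V : set Y, open V /\ f @` U = f @` setT `&` V].

(* The class of (z_1, ..., z_n) goes to the coefficients of the centred
   polynomial prod_i (X - (z_i - B)). Permutations and translations do not change
   it, and z |-> l z multiplies the coefficient of X^k by l^(n-k), so the map is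
   well defined; it is continuous since the coefficients are polynomial in the
   z_i, and injective since a polynomial determines its roots. Openness onto the
   image comes from the continuity of roots: if the coefficients of w are close to
   those of z, whose points are distinct, then after centring every point of z is
   close to a point of w, distinct points to distinct points. So the coefficient
   vectors all of whose configurations lie in an open U form a neighbourhood of
   the image of U; the weighted scalings being homeomorphisms of C^(n-1), the
   interior of this set is saturated and projects to an open set of
   P(n, n-1, ..., 2). *)

From HB Require Import structures.
From mathcomp Require Import all_boot all_order all_algebra all_fingroup.
From mathcomp Require Import generic_quotient.
From mathcomp Require Import all_classical all_reals all_analysis.
From mathcomp Require Import complex.
From mathcomp Require Import ring lra.
Set Implicit Arguments.
Unset Strict Implicit.
Unset Printing Implicit Defensive.
Import Order.TTheory GRing.Theory Num.Theory.
Import numFieldTopology.Exports.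
Local Open Scope classical_set_scope.
Local Open Scope ring_scope.
Local Open Scope complex_scope.
Local Open Scope quotient_scope.

Section FiniteLowerBound.
Variable R : realFieldType.

Lemma fin_lbound_gt0 (I : finType) (f : I -> R) : (forall i, 0 < f i) ->
  exists2 e : R, 0 < e & forall i, e <= f i.
Proof.
move=> f_gt0; pose S := \sum_i (f i)^-1.
have S_ge0 : 0 <= S by apply: sumr_ge0 => i _; rewrite invr_ge0 ltW.
exists (1 + S)^-1; first by rewrite invr_gt0 ltr_wpDr.
move=> i; rewrite -[f i]invrK lef_pV2 ?posrE ?invr_gt0 ?ltr_wpDr //.
have : (f i)^-1 <= S.
  rewrite /S (bigD1 i) //= lerDl; apply: sumr_ge0 => j _.
  by rewrite invr_ge0 ltW.
lra.
Qed.

End FiniteLowerBound.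

Section ComplexNorm.
Variable R : realType.
Local Notation C := R[i].
Local Notation normc := (@Normc.normc R).

Lemma normCE (z : C) : `|z| = (normc z)%:C.
Proof. by rewrite normc_def; case: z. Qed.

Lemma normc_ge0 (z : C) : 0 <= normc z.
Proof. by have := normr_ge0 z; rewrite normCE lecR. Qed.

Lemma normcD (x y : C) : normc (x + y) <= normc x + normc y.
Proof. by rewrite -lecR rmorphD -!normCE ler_normD. Qed.

Lemma normcX (x : C) k : normc (x ^+ k) = normc x ^+ k.
Proof. by apply: complexI; rewrite rmorphXn -!normCE normrX. Qed.

Lemma normcN (x : C) : normc (- x) = normc x.
Proof. by apply: complexI; rewrite -!normCE normrN. Qed.

Lemma distcC (x y : C) : normc (x - y) = normc (y - x).
Proof. by rewrite -normcN opprB. Qed.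

Lemma distc_triangle (x y z : C) : normc (x - z) <= normc (x - y) + normc (y - z).
Proof. by have := normcD (x - y) (y - z); rewrite addrA subrK. Qed.

Lemma normc_gt0 (x : C) : (0 < normc x) = (x != 0).
Proof. by rewrite -normr_gt0 normCE ltcR. Qed.

Lemma normc_sum (I : Type) (r : seq I) (P : pred I) (F : I -> C) :
  normc (\sum_(i <- r | P i) F i) <= \sum_(i <- r | P i) normc (F i).
Proof.
have := ler_norm_sum r F P.
have -> : \sum_(i <- r | P i) `|F i| = (\sum_(i <- r | P i) normc (F i))%:C.
  by rewrite rmorph_sum; apply: eq_bigr => i _; rewrite normCE.
by rewrite normCE lecR.
Qed.

Lemma normc_prod (I : Type) (r : seq I) (P : pred I) (F : I -> C) :
  normc (\prod_(i <- r | P i) F i) = \prod_(i <- r | P i) normc (F i).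
Proof.
apply: complexI; rewrite rmorph_prod -normCE normr_prod.
by apply: eq_bigr => i _; rewrite normCE.
Qed.

End ComplexNorm.

(* Continuity is handled by hand through sup-norm boxes, which generate the
   product topology of {ptws 'I_m -> C} (nbhs_ptws_boxP below). *)
Section Box.
Variable R : realType.
Local Notation C := R[i].
Local Notation normc := (@Normc.normc R).

Definition box {m : nat} (r : R) (x y : 'I_m -> C) := forall i, normc (y i - x i) < r.

Lemma box_le m r r' (x y : 'I_m -> C) : r <= r' -> box r x y -> box r' x y.
Proof. by move=> le_rr' xy i; exact: lt_le_trans (xy i) le_rr'. Qed.

End Box.

Section BoxContinuity.
Variables (R : realType) (m : nat).
Local Notation C := R[i].
Local Notation normc := (@Normc.normc R).

Definition bcontinuous (f : ('I_m -> C) -> C) := forall x (r : R), 0 < r ->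
  exists2 rho : R, 0 < rho & forall y, box rho x y -> normc (f y - f x) < r.

Lemma bcontinuous_cst c : bcontinuous (fun=> c).
Proof. by move=> x r r_gt0; exists 1 => // y _; rewrite subrr Normc.normc0. Qed.

Lemma bcontinuous_coord i : bcontinuous (fun y => y i).
Proof. by move=> x r r_gt0; exists r => // y; apply. Qed.

Lemma bcontinuousN f : bcontinuous f -> bcontinuous (fun y => - f y).
Proof.
move=> cf x r r_gt0; have [rho rho_gt0 h] := cf x r r_gt0.
by exists rho => // y xy; rewrite -opprD normcN; exact: h.
Qed.

Lemma bcontinuous_pair f g : bcontinuous f -> bcontinuous g ->
  forall x (r : R), 0 < r -> exists2 rho : R, 0 < rho & forall y, box rho x y ->
    normc (f y - f x) < r /\ normc (g y - g x) < r.
Proof.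
move=> cf cg x r r_gt0.
have [rf rf_gt0 hf] := cf x r r_gt0; have [rg rg_gt0 hg] := cg x r r_gt0.
exists (Num.min rf rg) => [|y xy]; first by rewrite lt_min rf_gt0.
by split; [apply: hf | apply: hg]; apply: box_le xy; rewrite ge_min lexx ?orbT.
Qed.

Lemma bcontinuousD f g : bcontinuous f -> bcontinuous g ->
  bcontinuous (fun y => f y + g y).
Proof.
move=> cf cg x r r_gt0.
have r2_gt0 : 0 < r / 2 by rewrite divr_gt0.
have [rho rho_gt0 h] := bcontinuous_pair cf cg x r2_gt0.
exists rho => // y /h[hf hg].
have -> : f y + g y - (f x + g x) = (f y - f x) + (g y - g x) by ring.
by apply: le_lt_trans (normcD _ _) _; lra.
Qed.

Lemma bcontinuousM f g : bcontinuous f -> bcontinuous g ->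
  bcontinuous (fun y => f y * g y).
Proof.
move=> cf cg x r r_gt0.
set a := normc (f x); set b := normc (g x).
have a_ge0 : 0 <= a := normc_ge0 _; have b_ge0 : 0 <= b := normc_ge0 _.
pose e := Num.min 1 (r / (a + b + 1)).
have e_gt0 : 0 < e by rewrite lt_min ltr01 divr_gt0 // ltr_wpDl // addr_ge0.
have e_le1 : e <= 1 by rewrite ge_min lexx.
have e_le : e * (a + b + 1) <= r.
  by rewrite -ler_pdivlMr ?ltr_wpDl ?addr_ge0 // ge_min lexx orbT.
have [rho rho_gt0 h] := bcontinuous_pair cf cg x e_gt0.
exists rho => // y /h[hf hg].
have -> : f y * g y - f x * g x =
    (f y - f x) * (g y - g x) + (f y - f x) * g x + f x * (g y - g x) by ring.
apply: le_lt_trans (normcD _ _) _; rewrite Normc.normcM.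
apply: le_lt_trans (lerD (normcD _ _) (lexx _)) _; rewrite !Normc.normcM -/a -/b.
have df_ge0 := normc_ge0 (f y - f x); have dg_ge0 := normc_ge0 (g y - g x).
nra.
Qed.

Lemma bcontinuous_sum N (F : 'I_N -> ('I_m -> C) -> C) :
  (forall j, bcontinuous (F j)) -> bcontinuous (fun y => \sum_(j < N) F j y).
Proof.
elim: N F => [|N IH] F cF.
  by under eq_fun do rewrite big_ord0; exact: bcontinuous_cst.
under eq_fun do rewrite big_ord_recr /=.
by apply: bcontinuousD (cF _); apply: (IH (fun j => F (widen_ord _ j))).
Qed.

Lemma bcontinuous_coef_prod_XsubC N (g : 'I_N -> ('I_m -> C) -> C) k :
  (forall j, bcontinuous (g j)) ->
  bcontinuous (fun y => (\prod_(j < N) ('X - (g j y)%:P))`_k).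
Proof.
elim: N g k => [|N IH] g k cg.
  by under eq_fun do rewrite big_ord0 coefC; exact: bcontinuous_cst.
under eq_fun do rewrite big_ord_recr /= mulrBr coefB coefMX coefMC.
have IHk k' := IH (fun j => g (widen_ord (leqnSn N) j)) k' (fun j => cg _).
apply: bcontinuousD (bcontinuousN (bcontinuousM (IHk _) (cg _))).
by case: k => [|k]; [exact: bcontinuous_cst | exact: IHk].
Qed.

Lemma bcontinuous_box p (F : 'I_p -> ('I_m -> C) -> C) :
  (forall k, bcontinuous (F k)) -> forall x (r : R), 0 < r ->
  exists2 rho : R, 0 < rho & forall y, box rho x y ->
    box r (fun k => F k x) (fun k => F k y).
Proof.
move=> cF x r r_gt0.
have /choice[rho rhoP] : forall k, exists rho : R, 0 < rho /\
    forall y, box rho x y -> normc (F k y - F k x) < r.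
  by move=> k; have [rho rho_gt0 h] := cF k x r r_gt0; exists rho.
have [e e_gt0 e_le] := fin_lbound_gt0 (fun k => proj1 (rhoP k)).
by exists e => // y xy k; apply: (proj2 (rhoP k)); apply: box_le xy.
Qed.

End BoxContinuity.

Section BoxTopology.
Variable R : realType.
Local Notation C := R[i].
Local Notation normc := (@Normc.normc R).

Lemma nbhs_normcP (x : C) (A : set C) :
  nbhs x A <-> exists2 r : R, 0 < r & forall y, normc (y - x) < r -> A y.
Proof.
split.
  move=> /nbhs_ballP[e /= e_gt0 eA]; exists (complex.Re e).
    by move: e_gt0; rewrite ltcE => /andP[].
  have eE : e = (complex.Re e)%:C.
    move: e_gt0; rewrite ltcE => /andP[/eqP Im_e _].
    by apply/eqP; rewrite eq_complex /= Im_e !eqxx.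
  by move=> y xy; apply: eA; rewrite /ball /= normCE distcC eE ltcE /= eqxx xy.
move=> [r r_gt0 rA]; apply/nbhs_ballP; exists r%:C; first by rewrite /= ltcE /= eqxx.
by move=> y; rewrite /ball /= normCE ltcE /= eqxx /= distcC; exact: rA.
Qed.

Variable m : nat.
Local Notation X := {ptws 'I_m -> C}.

Lemma nbhs_box (x : X) (r : R) : 0 < r -> nbhs x [set y | box r x y].
Proof.
move=> r_gt0.
apply: (@filter_forall X 'I_m (fun i y => normc (y i - x i) < r) (nbhs x) _) => i.
have xi_nbhs : nbhs (x i) [set z | normc (z - x i) < r] by apply/nbhs_normcP; exists r.
have := @pointwise_cvgP (@initial_topology 'I_m R (fun=> 0)) C (nbhs x) x.
move=> /(_ _)/proj1/(_ (@cvg_id _ (nbhs x))) x_cvg.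
exact: x_cvg i _ xi_nbhs.
Qed.

Lemma nbhs_ptws_boxP (x : X) (O : set X) :
  nbhs x O <-> exists2 r : R, 0 < r & forall y, box r x y -> O y.
Proof.
split; last first.
  move=> [r r_gt0 rO].
  exact: (@filterS X (nbhs x) (@nbhs_filter X x) _ _ rO (nbhs_box x r_gt0)).
pose F := filter_from [set r : R | 0 < r] (fun r => [set y : X | box r x y]).
have FF : Filter F.
  apply: filter_from_filter; first by exists 1 => /=.
  move=> r r' r_gt0 r'_gt0; exists (Num.min r r'); first by rewrite /= lt_min r_gt0.
  by move=> y xy; split; apply: box_le xy; rewrite ge_min lexx ?orbT.
have Fx : F --> x.
  apply/(proj2 (@pointwise_cvgP (@initial_topology 'I_m R (fun=> 0)) C F x FF)).
  move=> i A /nbhs_normcP[r r_gt0 rA].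
  by exists r => //= y xy; apply: rA; exact: xy i.
by move=> /Fx[r r_gt0 rO]; exists r.
Qed.

Lemma nbhs_set_type_boxP (A : set X) (x : set_type A) (W : set (set_type A)) :
  nbhs x W <-> exists2 r : R, 0 < r &
    forall y : set_type A, box r (\val x) (\val y) -> W y.
Proof.
rewrite nbhsE; split.
  move=> [B [[U oU UB] Bx] BW].
  have /nbhs_ptws_boxP[r r_gt0 rU] : nbhs (\val x : X) U.
    by apply: open_nbhs_nbhs; split => //; rewrite -UB in Bx.
  by exists r => // y xy; apply: BW; rewrite -UB; exact: rU.
move=> [r r_gt0 rW].
exists (\val @^-1` interior [set z : X | box r (\val x) z]).
  split; last exact: nbhs_box.
  by exists (interior [set z : X | box r (\val x) z]) => //; exact: open_interior.
by move=> y /interior_subset; exact: rW.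
Qed.

Lemma open_set_type_preimage (A : set X) (O : set X) :
  open O -> open (\val @^-1` O : set (set_type A)).
Proof. by move=> oO; exists O. Qed.

End BoxTopology.

Section BoxContinuousMaps.
Variables (R : realType) (m p : nat).
Local Notation C := R[i].
Local Notation X := {ptws 'I_m -> C}.
Local Notation Y := {ptws 'I_p -> C}.

Lemma ptws_continuous (F : X -> Y) :
  (forall k, bcontinuous (fun y => F y k)) -> continuous F.
Proof.
move=> cF x W /= /nbhs_ptws_boxP[r r_gt0 rW]; apply/nbhs_ptws_boxP.
have [rho rho_gt0 h] := bcontinuous_box cF x r_gt0.
by exists rho => // y /h; exact: rW.
Qed.

Lemma set_type_continuous (A : set X) (B : set Y)
    (f : set_type A -> set_type B) (F : ('I_m -> C) -> ('I_p -> C)) :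
  (forall y, \val (f y) = F (\val y)) ->
  (forall k, bcontinuous (fun y => F y k)) -> continuous f.
Proof.
move=> fE cF x W /= /nbhs_set_type_boxP[r r_gt0 rW]; apply/nbhs_set_type_boxP.
have [rho rho_gt0 h] := bcontinuous_box cF (\val x) r_gt0.
by exists rho => // y /h xy; apply: rW; rewrite !fE.
Qed.

End BoxContinuousMaps.

Lemma coef_prod_XsubC_scale (R : comNzRingType) (ps : seq R) (t : R) k :
  (k <= size ps)%N ->
  (\prod_(p <- ps) ('X - (t * p)%:P))`_k =
    t ^+ (size ps - k) * (\prod_(p <- ps) ('X - p%:P))`_k.
Proof.
move=> k_le; rewrite -(big_map ( *%R t) xpredT (fun p => 'X - p%:P)).
rewrite !coef_prod_XsubC ?size_map // mulrCA; congr (_ * _); rewrite mulr_sumr.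
apply: eq_bigr => I /eqP <-; rewrite -prodrMl.
by apply: eq_bigr => i _; rewrite (nth_map 0) // -[size ps]size_map.
Qed.

Section CenteredPolynomial.
Variables (R : realType) (m : nat).
Local Notation C := R[i].
Local Notation n := m.+2.
Implicit Types x y : 'I_n -> C.

Definition center x i := x i - barycenter x.

Definition cpoly x := \prod_(i < n) ('X - (center x i)%:P).

Lemma coefvecE x k : coefvec x k = (cpoly x)`_k.
Proof.
rewrite /coefvec /cpoly; congr (_`_ _).
have XsubC_center i : 'X - (x i)%:P + (barycenter x)%:P = 'X - (center x i)%:P.
  by rewrite /center polyCB; ring.
by under eq_bigr do rewrite XsubC_center.
Qed.

Lemma sum_center x : \sum_i center x i = 0.
Proof.
rewrite /center sumrB sumr_const card_ord /barycenter.
by rewrite -[_ / _ *+ _]mulr_natr divfK ?subrr ?pnatr_eq0.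
Qed.

Lemma cpoly_seq x : cpoly x = \prod_(c <- map (center x) (enum 'I_n)) ('X - c%:P).
Proof. by rewrite big_map enumT. Qed.

Lemma size_cpoly x : size (cpoly x) = n.+1.
Proof. by rewrite cpoly_seq size_prod_XsubC size_map size_enum_ord. Qed.

Lemma lead_coef_cpoly x : (cpoly x)`_n = 1.
Proof.
by have := lead_coef_prod_XsubC (index_enum 'I_n) xpredT (center x); rewrite /lead_coef size_cpoly.
Qed.

Lemma coef_cpoly_pred x : (cpoly x)`_n.-1 = 0.
Proof.
have ps_neq0 : size (map (center x) (enum 'I_n)) != 0%N by rewrite size_map size_enum_ord.
have := coefPn_prod_XsubC ps_neq0; rewrite -cpoly_seq size_map size_enum_ord => ->.
by rewrite big_map enumT sum_center oppr0.
Qed.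

Lemma horner_cpoly x w : (cpoly x).[w] = \prod_i (w - center x i).
Proof. by rewrite horner_prod; apply: eq_bigr => i _; rewrite hornerXsubC. Qed.

Lemma root_cpoly x i : (cpoly x).[center x i] = 0.
Proof. by rewrite horner_cpoly (bigD1 i) //= subrr mul0r. Qed.

Lemma coef_cpolyB_eq0 x y k : (m.+1 <= k)%N -> (cpoly x - cpoly y)`_k = 0.
Proof.
rewrite coefB leq_eqVlt => /orP[/eqP <-|]; first by rewrite !coef_cpoly_pred subrr.
rewrite leq_eqVlt => /orP[/eqP <-|]; first by rewrite !lead_coef_cpoly subrr.
by move=> n_lt_k; rewrite !nth_default ?subrr ?size_cpoly.
Qed.

Lemma size_cpolyB x y : (size (cpoly x - cpoly y)%R <= m.+1)%N.
Proof. by apply/leq_sizeP => k; exact: coef_cpolyB_eq0. Qed.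

Lemma eq_cpoly x y : coefvec x =1 coefvec y -> cpoly x = cpoly y.
Proof.
move=> xy; apply/eqP; rewrite -subr_eq0; apply/eqP/polyP => k; rewrite coef0.
have [k_lt|] := ltnP k m.+1; last exact: coef_cpolyB_eq0.
by have := xy (Ordinal k_lt); rewrite !coefvecE coefB /= => ->; rewrite subrr.
Qed.

End CenteredPolynomial.

Section ConfigurationAction.
Variables (R : realType) (m : nat).
Local Notation C := R[i].
Local Notation n := m.+2.
Implicit Types x y : 'I_n -> C.

Definition confmap (s : 'S_n) (l c : C) x : 'I_n -> C := fun i => l * x (s i) + c.

Lemma confmap_inj s l c x : l != 0 -> injective x -> injective (confmap s l c x).
Proof. by move=> l_neq0 x_inj i j /addIr/(mulfI l_neq0)/x_inj/perm_inj. Qed.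

Lemma conf_rel_confmap s l c x : l != 0 -> conf_rel x (confmap s l c x).
Proof. by move=> l_neq0; exists s, l, c. Qed.

Lemma barycenter_confmap s l c x :
  barycenter (confmap s l c x) = l * barycenter x + c.
Proof.
rewrite /barycenter /confmap big_split /= -mulr_sumr sumr_const card_ord.
rewrite -(@reindex_inj _ _ _ _ s xpredT x (@perm_inj _ s)) -[c *+ n]mulr_natr.
by field; rewrite addrC -natrD addn2 pnatr_eq0.
Qed.

Lemma center_confmap s l c x i : center (confmap s l c x) i = l * center x (s i).
Proof. by rewrite /center barycenter_confmap /confmap; ring. Qed.

Lemma center_inj x : injective x -> injective (center x).
Proof. by move=> x_inj i j /addIr/x_inj. Qed.

Lemma coefvec_confmap s l c x (k : 'I_n.-1) :
  coefvec (confmap s l c x) k = l ^+ (n - k) * coefvec x k.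
Proof.
rewrite !coefvecE /cpoly; under eq_bigr do rewrite center_confmap.
rewrite -(@reindex_inj _ _ _ _ s xpredT (fun i => 'X - (l * center x i)%:P) (@perm_inj _ s)).
have -> : \prod_i ('X - (l * center x i)%:P) =
    \prod_(c <- map (center x) (enum 'I_n)) ('X - (l * c)%:P) by rewrite big_map enumT.
rewrite coef_prod_XsubC_scale -?cpoly_seq size_map size_enum_ord //.
by rewrite ltnW // (leq_trans (ltn_ord k)).
Qed.

Lemma conf_rel_wrel x y : conf_rel x y -> wrel (coefvec x) (coefvec y).
Proof.
move=> [s [l [c [l_neq0 yE]]]]; exists l; split => // k.
have -> : y = confmap s l c x by apply: funext => i; rewrite yE.
exact: coefvec_confmap.
Qed.

Lemma coefvec_neq0 x : injective x -> coefvec x <> (fun=> 0).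
Proof.
move=> x_inj coefvec_x0.
have cpoly0 : cpoly (fun _ : 'I_n => 0 : C) = 'X^n.
  have center0 i : center (fun _ : 'I_n => 0 : C) i = 0.
    by rewrite /center /barycenter big1 // mul0r subr0.
  by rewrite /cpoly; under eq_bigr do rewrite center0 subr0; rewrite prodr_const card_ord.
have : cpoly x = 'X^n.
  rewrite -cpoly0; apply: eq_cpoly => k.
  have k_lt : (k < n)%N by apply: ltn_trans (ltn_ord k) _.
  by rewrite coefvec_x0 coefvecE cpoly0 coefXn ltn_eqF.
move=> cpolyE; have center0 i : center x i = 0.
  have := root_cpoly x i; rewrite cpolyE hornerXn => /eqP.
  by rewrite expf_eq0 => /andP[_ /eqP].
have := center0 ord0; rewrite -(center0 (Ordinal (isT : (1 < n)%N))).
by move/(center_inj x_inj).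
Qed.

Lemma eq_cpoly_confmap x y : injective y -> cpoly x = cpoly y ->
  exists s c, y = confmap s 1 c x.
Proof.
move=> y_inj cpolyE.
have /choice[f fE] : forall i, exists j, center x j = center y i.
  move=> i; have := root_cpoly y i; rewrite -cpolyE horner_cpoly.
  by move/eqP/prodf_eq0 => [j _]; rewrite subr_eq0 => /eqP ->; exists j.
have f_inj : injective f by move=> i j fij; apply: (center_inj y_inj); rewrite -!fE fij.
exists (perm f_inj), (barycenter y - barycenter x); apply: funext => i.
have := fE i; rewrite /center /confmap permE mul1r => fiE.
by rewrite -[y i](subrK (barycenter y)) -fiE; ring.
Qed.

End ConfigurationAction.

Section RootContinuity.
Variable R : realType.
Local Notation C := R[i].
Local Notation normc := (@Normc.normc R).

Lemma fin_separation (I : finType) (c : I -> C) : injective c ->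
  exists2 r : R, 0 < r & forall i j, i != j -> r <= normc (c i - c j).
Proof.
move=> c_inj.
pose f (p : I * I) := if p.1 == p.2 then 1 else normc (c p.1 - c p.2).
have f_gt0 p : 0 < f p.
  rewrite /f; case: eqP => [_|/eqP p12]; first exact: ltr01.
  by rewrite normc_gt0 subr_eq0 (inj_eq c_inj).
have [r r_gt0 r_le] := fin_lbound_gt0 f_gt0.
by exists r => // i j ij; have := r_le (i, j); rewrite /f /= (negbTE ij).
Qed.

Lemma near_perm (I : finType) (c e : I -> C) (r : R) :
  (forall i j, i != j -> 2 * r <= normc (c i - c j)) ->
  (forall i, exists j, normc (e j - c i) < r) ->
  exists s : {perm I}, forall i, normc (e (s i) - c i) < r.
Proof.
move=> c_sep /choice[f fP].
suff f_inj : injective f by exists (perm f_inj) => i; rewrite permE.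
move=> i j fij; apply/eqP; apply: contraT => ij.
have := fP i; rewrite fij distcC => fj_near_ci.
have := distc_triangle (c i) (e (f j)) (c j).
by have := c_sep i j ij; have := fP j; lra.
Qed.

Lemma normc_prod_lt (I : finType) (a : I -> C) (r : R) : 0 <= r ->
  normc (\prod_i a i) < r ^+ #|I| -> exists i, normc (a i) < r.
Proof.
move=> r_ge0; rewrite normc_prod; apply: contraPP => /forallNP a_ge.
apply/negP; rewrite -leNgt -prodr_const; apply: ler_prod => i _.
by rewrite r_ge0 leNgt; apply/negP; exact: a_ge.
Qed.

Lemma normc_horner_le (p : {poly C}) N w : (size p <= N)%N ->
  normc p.[w] <= \sum_(k < N) normc p`_k * normc w ^+ k.
Proof.
move=> p_le; rewrite (horner_coef_wide _ p_le).
apply: le_trans (normc_sum _ _ _) _; apply: ler_sum => k _.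
by rewrite Normc.normcM normcX.
Qed.

Variable m : nat.
Local Notation n := m.+2.

Lemma cpoly_roots_near (x : 'I_n -> C) (d : R) : 0 < d ->
  exists2 e : R, 0 < e & forall z, box e (coefvec x) (coefvec z) ->
    forall i, exists j, normc (center z j - center x i) < d.
Proof.
move=> d_gt0; pose S i := \sum_(k < m.+1) normc (center x i) ^+ k.
have S_ge0 i : 0 <= S i by apply: sumr_ge0 => k _; rewrite exprn_ge0 ?normc_ge0.
have q_gt0 i : 0 < d ^+ n / (1 + S i) by rewrite divr_gt0 ?exprn_gt0 ?ltr_wpDr.
have [e e_gt0 e_le] := fin_lbound_gt0 q_gt0.
exists e => // z xz i.
(* At the root w := center x i of cpoly x, (cpoly z).[w] = (cpoly z - cpoly x).[w]
   has small coefficients, so one factor w - center z j of (cpoly z).[w] is small. *)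
have [j] : exists j, normc (center x i - center z j) < d.
  apply: normc_prod_lt (ltW d_gt0) _; rewrite card_ord -horner_cpoly.
  have -> : (cpoly z).[center x i] = (cpoly z - cpoly x).[center x i].
    by rewrite hornerD hornerN root_cpoly subr0.
  apply: le_lt_trans (normc_horner_le _ (size_cpolyB z x)) _.
  have sum_le : \sum_(k < m.+1) normc (cpoly z - cpoly x)`_k * normc (center x i) ^+ k
      <= e * S i.
    rewrite /S mulr_sumr; apply: ler_sum => k _; apply: ler_wpM2r.
      by rewrite exprn_ge0 ?normc_ge0.
    by rewrite coefB -!coefvecE ltW.
  have := e_le i; set q := d ^+ n / (1 + S i) => e_le_q.
  have qE : q * (1 + S i) = d ^+ n by rewrite divfK // lt0r_neq0 // ltr_wpDr.
  have := S_ge0 i; have := q_gt0 i; rewrite -/q; nra.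
by rewrite distcC; exists j.
Qed.

Lemma coefvec_near_confmap (x : 'I_n -> C) (d : R) : injective x -> 0 < d ->
  exists2 e : R, 0 < e & forall z, box e (coefvec x) (coefvec z) ->
    exists s c, box d x (confmap s 1 c z).
Proof.
move=> x_inj d_gt0.
have [r r_gt0 x_sep] := fin_separation (center_inj x_inj).
pose d' := Num.min d (r / 2).
have d'_gt0 : 0 < d' by rewrite lt_min d_gt0 divr_gt0.
have d'_le : d' <= d by rewrite ge_min lexx.
have sep i j : i != j -> 2 * d' <= normc (center x i - center x j).
  move=> /x_sep; apply: le_trans.
  by rewrite -ler_pdivlMl // ge_min mulrC lexx orbT.
have [e e_gt0 near] := cpoly_roots_near x d'_gt0.
exists e => // z /near/(near_perm sep)[s sP].
exists s, (barycenter x - barycenter z) => i.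
have -> : confmap s 1 (barycenter x - barycenter z) z i - x i =
    center z (s i) - center x i by rewrite /confmap /center; ring.
exact: lt_le_trans (sP i) d'_le.
Qed.

End RootContinuity.

Section WeightedScaling.
Variables (R : realType) (m : nat).
Local Notation C := R[i].
Local Notation n := m.+2.
Local Notation V := {ptws 'I_m.+1 -> C}.
Local Notation wrel := (@wrel R n).

Definition wscale (t : C) (a : 'I_m.+1 -> C) : 'I_m.+1 -> C :=
  fun k => t ^+ (n - k) * a k.

Lemma wscaleK t : t != 0 -> cancel (wscale t) (wscale t^-1).
Proof.
move=> t_neq0 a; apply: funext => k.
by rewrite /wscale mulrA -exprMn mulVf // expr1n mul1r.
Qed.

Lemma wrel_wscale a b : wrel a b -> exists2 t, t != 0 & b = wscale t a.
Proof. by move=> [t [t_neq0 bE]]; exists t => //; apply: funext => k; rewrite bE. Qed.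

Lemma wscale_continuous t : continuous (wscale t : V -> V).
Proof.
apply: ptws_continuous => k.
by rewrite /wscale; exact: bcontinuousM (bcontinuous_cst _) (bcontinuous_coord k).
Qed.

Lemma interior_wrel (S : set V) :
  (forall a b, wrel a b -> S a -> S b) ->
  forall a b, wrel a b -> interior S a -> interior S b.
Proof.
move=> S_wrel a b /wrel_wscale[t t_neq0 ->] Sa.
have tV_neq0 : t^-1 != 0 by rewrite invr_eq0.
have : continuous (wscale t^-1 : V -> V) by exact: wscale_continuous.
move=> /(_ (wscale t a)); rewrite /continuous_at wscaleK // => /(_ _ Sa) near_b.
have sub : wscale t^-1 @^-1` S `<=` S.
  move=> y /S_wrel; apply; exists t; split => // k.
  by rewrite -[y in LHS](wscaleK tV_neq0) invrK.
exact: (@filterS V (nbhs (wscale t a : V)) _ _ _ sub near_b).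
Qed.

End WeightedScaling.

Section Embedding.
Variables (R : realType) (m : nat) (hn : (2 <= m.+2)%N).
Local Notation C := R[i].
Local Notation n := m.+2.
Local Notation V := {ptws 'I_m.+1 -> C}.
Local Notation Fc := (set_type (@confset R n)).
Local Notation NZt := (set_type (@nzset R n)).
Local Notation Mq := (M0quot R n).
Local Notation Pq := (Pw R n).
Local Notation psiphi := (@psiphi R n hn).
Local Notation wrel := (@wrel R n).

Lemma confset_inj (x : Fc) : injective (\val x).
Proof. exact: set_valP x. Qed.

Definition conf_of (x : 'I_n -> C) (x_inj : injective x) : Fc :=
  SigSub (mem_set (x_inj : confset x)).

Definition coefNZ (x : Fc) : NZt := insubd (@NZ_default R n hn) (coefvec (\val x)).

Lemma coefNZ_val x : \val (coefNZ x) = coefvec (\val x).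
Proof.
rewrite val_insubd ifT //; apply/mem_set => coefvec0.
exact: coefvec_neq0 (confset_inj (x := x)) coefvec0.
Qed.

Lemma piM_eqP (x y : Fc) : \pi_Mq x = \pi_Mq y <-> conf_rel (\val x) (\val y).
Proof. by split => [/eqquotP/asboolP | xy]; last by apply/eqquotP/asboolP. Qed.

Lemma piP_eqP (a b : NZt) : \pi_Pq a = \pi_Pq b <-> wrel (\val a) (\val b).
Proof. by split => [/eqquotP/asboolP | ab]; last by apply/eqquotP/asboolP. Qed.

Lemma psiphi_pi (x : Fc) : psiphi (\pi_Mq x) = \pi_Pq (coefNZ x).
Proof.
apply/piP_eqP; rewrite !coefNZ_val; apply: conf_rel_wrel.
by apply/piM_eqP; rewrite reprK.
Qed.

Lemma coefvec_bcontinuous (k : 'I_m.+1) : bcontinuous (fun z : 'I_n -> C => coefvec z k).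
Proof.
have barycenter_cont : bcontinuous (fun z : 'I_n -> C => barycenter z).
  rewrite /barycenter; apply: bcontinuousM (bcontinuous_cst _).
  exact: bcontinuous_sum (fun j => bcontinuous_coord j).
have center_cont j : bcontinuous (fun z : 'I_n -> C => center z j).
  exact: bcontinuousD (bcontinuous_coord j) (bcontinuousN barycenter_cont).
under eq_fun do rewrite coefvecE.
exact: bcontinuous_coef_prod_XsubC center_cont.
Qed.

Lemma psiphi_continuous : continuous psiphi.
Proof.
apply/quotient_continuous.
have -> : psiphi \o \pi_Mq = \pi_Pq \o coefNZ by apply: funext => x /=; rewrite psiphi_pi.
move=> x; apply: continuous_comp; last exact: pi_continuous.
exact: set_type_continuous coefNZ_val coefvec_bcontinuous x.
Qed.

Lemma psiphi_inj : injective psiphi.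
Proof.
move=> q1 q2; rewrite -[q1]reprK -[q2]reprK !psiphi_pi => /piP_eqP.
rewrite !coefNZ_val => /wrel_wscale[t t_neq0 coefvec2].
set x1 := \val (repr q1); set x2 := \val (repr q2).
have /eq_cpoly_confmap : cpoly (confmap 1 t 0 x1) = cpoly x2.
  by apply: eq_cpoly => k; rewrite coefvec_confmap coefvec2.
case=> [|s [c x2E]]; first exact: confset_inj.
apply/piM_eqP; exists s, t, c; split => // i.
by rewrite -/x1 -/x2 x2E /confmap perm1 mul1r addr0.
Qed.

Definition fibre_within (U : set Mq) : set V :=
  [set b | forall z : Fc, wrel (coefvec (\val z)) b -> U (\pi_Mq z)].

Lemma fibre_within_wrel U a b : wrel a b -> fibre_within U a -> fibre_within U b.
Proof. by move=> ab Ua z /wrel_trans/(_ (wrel_sym ab)); exact: Ua. Qed.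

Lemma nbhs_fibre_within (U : set Mq) (x : Fc) : open U -> U (\pi_Mq x) ->
  nbhs (coefvec (\val x) : V) (fibre_within U).
Proof.
move=> oU Ux.
have : nbhs x (\pi_Mq @^-1` U : set Fc) by apply: open_nbhs_nbhs; split.
move=> /nbhs_set_type_boxP[d d_gt0 d_U].
have [e e_gt0 near] := coefvec_near_confmap (confset_inj (x := x)) d_gt0.
apply/nbhs_ptws_boxP; exists e => // b xb z /wrel_wscale[t t_neq0 bE].
have y_inj := confmap_inj (s := 1) (c := 0) t_neq0 (confset_inj (x := z)).
have : box e (coefvec (\val x)) (coefvec (confmap 1 t 0 (\val z))).
  by move=> k; rewrite coefvec_confmap -[_ * _]/(wscale t _ k) -bE; exact: xb.
move=> /near[s [c xy]].
have z2_inj := confmap_inj (s := s) (c := c) (oner_neq0 C) y_inj.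
suff -> : \pi_Mq z = \pi_Mq (conf_of z2_inj) by apply: d_U.
apply/piM_eqP; apply: conf_rel_trans (conf_rel_confmap _ _ _ t_neq0) _.
exact: conf_rel_confmap _ _ _ (oner_neq0 C).
Qed.

Lemma psiphi_open (U : set Mq) : open U ->
  exists W : set Pq, open W /\ psiphi @` U = psiphi @` setT `&` W.
Proof.
move=> oU; pose O : set NZt := \val @^-1` interior (fibre_within U).
exists (\pi_Pq @` O); split.
  change (open (\pi_Pq @^-1` (\pi_Pq @` O) : set NZt)).
  have -> : \pi_Pq @^-1` (\pi_Pq @` O) = O.
    apply/seteqP; split=> [b [a Oa /piP_eqP ab]|b Ob]; last by exists b.
    exact: interior_wrel (@fibre_within_wrel U) _ _ ab Oa.
  exact/open_set_type_preimage/open_interior.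
apply/seteqP; split=> [_ [q Uq <-]|_ [[q _ <-] [a Oa qa]]].
  split; first by exists q.
  exists (coefNZ (repr q)); last by rewrite -psiphi_pi reprK.
  by rewrite /O /= coefNZ_val; apply: nbhs_fibre_within oU _; rewrite reprK.
exists q => //; rewrite -[q]reprK; apply: (interior_subset Oa).
by move: qa; rewrite -[q in psiphi q]reprK psiphi_pi => /piP_eqP; rewrite coefNZ_val => /wrel_sym.
Qed.

End Embedding.

Theorem mainTheorem4 (R : realType) (n : nat) (hn : (2 <= n)%N) :
  top_embedding (@psiphi R n hn).
Proof.
case: n hn => [|[|m]] // hn.
by split; [exact: psiphi_continuous | exact: psiphi_inj | exact: psiphi_open].
Qed.
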